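(* Let $(X,d,A)$ be a metric pair and $p\in[1,\infty]$. If $(X,d)$ is separable, then $(\overline{D}_p(X,A),W_p)$ is separable. Conversely, if $(\overline{D}_p(X,A),W_p)$ is separable, then $(X/A,d_p)$ is separable.
   Context: A metric on $X$ is a map $d:X\times X\to[0,\infty]$ with $d(x,x)=0$, symmetry and the triangle inequality (infinite distances allowed, $d(x,y)=0$ need not imply $x=y$); a metric pair $(X,d,A)$ is such a space with a closed subset $A$. Write $d(x,A)=\inf_{a\in A}d(x,a)$, $A^\delta=\{x:d(x,A)<\delta\}$. $\overline{D}(X,A)$ is the set of countable formal sums $\hat\alpha=\sum_{i\in I}x_i$ of points of $X\setminus A$ (repetitions allowed); $0$ the empty sum. A matching of $\hat\alpha=\sum_{i\in I}x_i$, $\hat\beta=\sum_{j\in J}y_j$ is a formal sum $\sum_{k\in K}(x_k,y_{\varphi(k)})+\sum_{i\in I\setminus K}(x_i,z_i)+\sum_{j\in J\setminus\varphi(K)}(w_j,y_j)$ with $K\subset I$, $\varphi$ injective, $z_i,w_j\in A$; its $p$-cost is the $\ell^p$ norm (sup norm if $p=\infty$) of the distances of paired points; $W_p$ is the infimum of $p$-costs. $u_\delta(\alpha)$, $\ell_\delta(\alpha)$ are the restrictions of $\hat\alpha$ to $X\setminus A^\delta$ and to $A^\delta\setminus A$. For $p<\infty$, $\overline{D}_p(X,A)=\{\alpha: |u_\infty(\alpha)|<\infty,\ W_p(\ell_\infty(\alpha),0)<\infty\}$; $\overline{D}_\infty(X,A)=\{\alpha:|u_\delta(\alpha)|<\infty\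 \forall\delta>0\}$. $X/A$ is the quotient set collapsing $A$ to a point, with the metric $d_p([x],[y])=\min\big(d(x,y),\|(d(x,A),d(y,A))\|_p\big)$ (which is well defined on $X/A$). *)

From HB Require Import structures.
From mathcomp Require Import all_boot all_order all_algebra.
From mathcomp Require Import all_classical all_reals.
From mathcomp Require Import ereal esum exp.
Set Implicit Arguments. Unset Strict Implicit. Unset Printing Implicit Defensive.
Import Order.TTheory GRing.Theory Num.Theory.
Local Open Scope classical_set_scope.
Local Open Scope ereal_scope.

Section Defs.
Context {R : realType} {X : Type}.

Definition is_emetric (d : X -> X -> \bar R) :=
  [/\ (forall x y, 0 <= d x y), (forall x, d x x = 0),
      (forall x y, d x y = d y x) &
      (forall x y z, d x z <= d x y + d y z)].

(* d(x,A) = inf_{a in A} d(x,a)  (= +oo if A is empty) *)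
Definition dist_set (d : X -> X -> \bar R) (A : set X) (x : X) : \bar R :=
  ereal_inf (d x @` A).

Definition closed_in (d : X -> X -> \bar R) (A : set X) :=
  forall x, dist_set d A x = 0 -> A x.

Definition thick (d : X -> X -> \bar R) (A : set X) (delta : \bar R) : set X :=
  [set x | dist_set d A x < delta].

Definition lpnorm {T : choiceType} (p : \bar R) (S : set T) (f : T -> \bar R)
  : \bar R :=
  match p with
  | r%:E => poweR (esum S (fun i => poweR (f i) r)) (r^-1)%R
  | _ => ereal_sup ([set 0] `|` f @` S)
  end.

(* A countable formal sum sum_{i in I} x_i is represented by an index set
   I : set nat together with the points x : nat -> X (only x i, i in I,
   matter).  Formal sums are identified up to reindexing; W_p below is
   invariant under reindexing. *)
Definition diagram := (set nat * (nat -> X))%type.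

Definition is_diagram (A : set X) (a : diagram) :=
  forall i, a.1 i -> ~ A (a.2 i).

Definition restrict (U : set X) (a : diagram) : diagram :=
  (a.1 `&` (fun i => U (a.2 i)), a.2).

Definition diag0 (x0 : nat -> X) : diagram := (set0, x0).

(* matching of a = sum_{i in I} x_i and b = sum_{j in J} y_j given by
   K subset I, phi injective on K with phi(K) subset J, z_i in A for i in I\K,
   w_j in A for j in J \ phi(K). *)
Definition is_matching (A : set X) (a b : diagram) (K : set nat)
  (phi : nat -> nat) (z w : nat -> X) :=
  [/\ K `<=` a.1,
      (forall k1 k2, K k1 -> K k2 -> phi k1 = phi k2 -> k1 = k2),
      phi @` K `<=` b.1,
      (forall i, a.1 i -> ~ K i -> A (z i)) &
      (forall j, b.1 j -> ~ (phi @` K) j -> A (w j))].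

(* p-cost of that matching: l^p norm of the distances of paired points;
   inl i indexes the pair containing x_i, inr j the pair (w_j, y_j). *)
Definition matching_cost (d : X -> X -> \bar R) (p : \bar R) (a b : diagram)
  (K : set nat) (phi : nat -> nat) (z w : nat -> X) : \bar R :=
  lpnorm p (inl @` a.1 `|` inr @` (b.1 `\` phi @` K))
    (fun t : nat + nat => match t with
       | inl i => if `[< K i >] then d (a.2 i) (b.2 (phi i))
                  else d (a.2 i) (z i)
       | inr j => d (w j) (b.2 j)
       end).

Definition Wp (d : X -> X -> \bar R) (A : set X) (p : \bar R) (a b : diagram)
  : \bar R :=
  ereal_inf [set c | exists K phi z w,
    is_matching A a b K phi z w /\ c = matching_cost d p a b K phi z w].

Definition u_part d A (delta : \bar R) (a : diagram) : diagram :=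
  restrict (~` thick d A delta) a.
Definition l_part d A (delta : \bar R) (a : diagram) : diagram :=
  restrict (thick d A delta `\` A) a.

Definition Dp (d : X -> X -> \bar R) (A : set X) (p : \bar R) : set diagram :=
  [set a | is_diagram A a /\
    match p with
    | +oo => forall delta : R, (0 < delta)%R ->
               finite_set (u_part d A delta%:E a).1
    | _ => finite_set (u_part d A +oo a).1 /\
           Wp d A p (l_part d A +oo a) (diag0 a.2) < +oo
    end].

(* d_p on X/A, pulled back to X along the quotient map x |-> [x] *)
Definition quot_dist (d : X -> X -> \bar R) (A : set X) (p : \bar R)
  (x y : X) : \bar R :=
  Order.min (d x y)
    (lpnorm p [set: bool] (fun b => if b then dist_set d A x
                                    else dist_set d A y)).

End Defs.

Definition separable_in {R : realType} {T : Type} (S : set T)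
  (dist : T -> T -> \bar R) :=
  exists D : set T, [/\ D `<=` S, countable D &
    forall s, S s -> forall e : R, (0 < e)%R ->
      exists2 t, D t & dist s t < e%:E].

From HB Require Import structures.
From mathcomp Require Import all_boot all_order all_algebra.
From mathcomp Require Import all_classical all_reals.
From mathcomp Require Import ereal esum exp.
From mathcomp Require Import lra.
Set Implicit Arguments. Unset Strict Implicit. Unset Printing Implicit Defensive.
Import Order.TTheory GRing.Theory Num.Theory.
Local Open Scope classical_set_scope.
Local Open Scope ereal_scope.

(* If X is separable, fix a dense sequence g.  Every diagram of D_p is
   W_p-close to a finite diagram with points in the range of g and outside A:
   keep finitely many of its points -- those far from A, plus, for p < oo,
   enough points to capture all but a small part of the l^p cost of matching
   the rest to A -- move each of them to a nearby g k, which lies outside A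
   since A is closed, and match all other points to A.  These finite diagrams
   form a countable family.
   Conversely, if D is a countable dense subset of D_p, the points of the
   diagrams of D, together with one point of A, are dense in X/A: a diagram of
   D that is e-close to the one-point diagram x puts x within e either of one
   of its own points or of A. *)

Section lpnorm.
Context {R : realType} {T : choiceType}.
Implicit Types (p : \bar R) (S : set T) (f : T -> \bar R).

Lemma eq_lpnorm p S f g :
  (forall t, S t -> f t = g t) -> lpnorm p S f = lpnorm p S g.
Proof.
case: p => [r||] fg /=; try by rewrite (eq_imagel fg).
by rewrite (eq_esum (b := fun i => g i `^ r)) // => t /fg ->.
Qed.

Lemma lpnorm_image {U : choiceType} p (S : set U) (e : U -> T) f :
  set_inj S e -> lpnorm p (e @` S) f = lpnorm p S (f \o e).
Proof. by case: p => [r||] einj /=; rewrite ?esum_image // -image_comp. Qed.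

Lemma lpnorm_ge_term p S f i :
  1 <= p -> S i -> 0 <= f i -> f i <= lpnorm p S f.
Proof.
case: p => [r||] //; rewrite ?lee_fin => r1 Si fi0 /=; last first.
  by apply: ereal_sup_ubound; right; exists i.
have r0 : (0 < r)%R by apply: lt_le_trans r1.
have -> : f i = (f i `^ r) `^ r^-1 by rewrite -poweRrM divff ?gt_eqF // poweRe1.
have fiS : f i `^ r <= esum S (fun j => f j `^ r).
  apply: esum_ge; exists [set i]; last by rewrite fsbig_set1.
  by split; [exact: finite_set1 | move=> _ ->].
apply: gt0_ler_poweR fiS; rewrite ?invr_ge0 ?ltW // in_itv /= leey andbT.
  exact: poweR_ge0.
by apply: esum_ge0 => *; exact: poweR_ge0.
Qed.

Lemma lpnormy_le S f (c : R) :
  (0 <= c)%R -> (forall i, S i -> f i <= c%:E) -> lpnorm +oo S f <= c%:E.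
Proof.
move=> c0 fc; apply: ge_ereal_sup => _ [->|[i Si <-]]; [by rewrite lee_fin | exact: fc].
Qed.

Lemma lpnorm_le (r c : R) S f : (0 < r)%R -> (0 <= c)%R ->
  esum S (fun i => f i `^ r) <= (c `^ r)%:E -> lpnorm r%:E S f <= c%:E.
Proof.
move=> r0 c0 Sc.
rewrite /= -[c in c%:E](powRr1 c0) -(divff (lt0r_neq0 r0)) powRrM -poweR_EFin.
apply: gt0_ler_poweR Sc; rewrite ?invr_ge0 ?ltW // in_itv /= leey andbT.
  by apply: esum_ge0 => *; exact: poweR_ge0.
by rewrite lee_fin powR_ge0.
Qed.

Lemma esum_fin_lty S f : finite_set S ->
  (forall t, S t -> 0 <= f t) -> (forall t, S t -> f t < +oo) -> esum S f < +oo.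
Proof.
move=> Sfin f0 flt; rewrite esum_fset // => [|t /[!inE]/f0 //].
rewrite fsbig_finite // big_seq; apply: lte_sum_pinfty => t.
by rewrite in_fset_set // inE => /flt.
Qed.

Lemma lpnorm_fin_lty (r : R) S f : (0 < r)%R -> finite_set S ->
  (forall t, S t -> 0 <= f t) -> (forall t, S t -> f t < +oo) ->
  lpnorm r%:E S f < +oo.
Proof.
move=> r0 Sfin f0 flt; apply: poweR_lty; apply: esum_fin_lty => // t St.
  exact: poweR_ge0.
exact/poweR_lty/flt.
Qed.

Lemma esum_le_subset S S' f :
  S `<=` S' -> (forall t, S' t -> 0 <= f t) -> esum S f <= esum S' f.
Proof.
move=> SS' f0; apply: ge_ereal_sup => _ [F [Ffin FS] <-].
by apply: ereal_sup_ubound; exists F => //; split => // t /FS /SS'.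
Qed.

Lemma esum_le_size (s : seq T) f (c : R) : uniq s ->
  (forall i, i \in s -> 0 <= f i <= c%:E) -> esum [set` s] f <= ((size s)%:R * c)%:E.
Proof.
move=> s_uniq fc; rewrite esum_fset // => [|i /[!inE] /fc /andP[] //].
rewrite -fsbig_seq // big_seq.
apply: le_trans (lee_sum (g := fun=> c%:E) _ _) _ => [i /fc /andP[_ //]|].
by rewrite -big_seq sumEFin big_const_seq count_predT iter_addr addr0 mulr_natl.
Qed.

Lemma esum_tail_le S f (eps : R) : (0 < eps)%R ->
  (forall t, S t -> 0 <= f t) -> esum S f < +oo ->
  exists2 F, finite_set F /\ F `<=` S & esum (S `&` ~` F) f <= eps%:E.
Proof.
move=> eps0 f0 Slt.
have Sfin : esum S f \is a fin_num by rewrite ge0_fin_numE // esum_ge0.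
have [_ [F [Ffin FS] <-] Fgt] := ub_ereal_sup_adherent eps0 Sfin.
exists F => //.
have SE := esumID F S f f0.
rewrite (setIidr FS) (esum_fset Ffin) in SE => [|t /[!inE] /FS /f0 //].
have [Ffin' tailfin] : \sum_(i \in F) f i \is a fin_num /\
    esum (S `&` ~` F) f \is a fin_num.
  by apply/andP; rewrite -fin_numD -SE.
move: Fgt; rewrite -/(esum S f) SE -(fineK Ffin') -(fineK tailfin).
by rewrite -EFinD !(lte_fin, lee_fin); lra.
Qed.

End lpnorm.

Lemma countableU {T : Type} (P Q : set T) :
  countable P -> countable Q -> countable (P `|` Q).
Proof. by move=> Pc Qc; rewrite -bigcup2E; apply: bigcup_countable => // -[|[|]]. Qed.

Lemma finite_nat_bounded (K : set nat) : finite_set K -> exists n, K `<=` `I_n.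
Proof.
move=> /finite_seqP [s ->]; exists (\max_(i <- s) i).+1 => i /= si.
by rewrite ltnS (leq_bigmax_seq (F := id)) ?si.
Qed.

Section matchings.
Context {R : realType} {X : Type}.
Variables (d : X -> X -> \bar R) (A : set X).
Hypothesis dm : is_emetric d.
Implicit Types (p : \bar R) (a b : @diagram X).

Lemma dist_set_le x y : A y -> dist_set d A x <= d x y.
Proof. by move=> Ay; apply: ereal_inf_lbound; exists y. Qed.

Lemma dist_set_ge0 x : 0 <= dist_set d A x.
Proof. by case: dm => d0 _ _ _; apply: le_ereal_inf_tmp => _ [y _ <-]. Qed.

Lemma dist_set_lt x c : dist_set d A x < c -> exists2 y, A y & d x y < c.
Proof. by move=> /ereal_inf_lt [_ [y Ay <-]] xyc; exists y. Qed.

Lemma dist_set_lt_choice (x : nat -> X) c :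
  exists z, forall i, dist_set d A (x i) < c -> A (z i) /\ d (x i) (z i) < c.
Proof.
suff /choice [z zP] : forall i, exists y,
  dist_set d A (x i) < c -> A y /\ d (x i) y < c by exists z.
move=> i; have [xc|nxc] := pselect (dist_set d A (x i) < c); last by exists (x i).
by have [y Ay xy] := dist_set_lt xc; exists y.
Qed.

Lemma dist_set_mem x : A x -> dist_set d A x = 0.
Proof.
by case: dm => _ dxx _ _ Ax; apply/le_anti; rewrite dist_set_ge0 -(dxx x) dist_set_le.
Qed.

Lemma closed_dist_set_gt0 x : closed_in d A -> ~ A x ->
  exists2 r : R, (0 < r)%R & r%:E <= dist_set d A x.
Proof.
move=> Acl nAx; have : dist_set d A x != 0 by apply/eqP => /Acl.
move: (dist_set_ge0 x); case: (dist_set d A x) => [r| |] //; last first.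
  by move=> _ _; exists 1%R; rewrite ?leey.
by rewrite lee_fin eqe => r0 rn0; exists r; rewrite // lt_neqAle eq_sym rn0.
Qed.

Lemma Wp_le_cost p a b K phi z w : is_matching A a b K phi z w ->
  Wp d A p a b <= matching_cost d p a b K phi z w.
Proof. by move=> m; apply: ereal_inf_lbound; exists K, phi, z, w. Qed.

Lemma Wp_lt_cost p a b c : Wp d A p a b < c -> exists K phi z w,
  is_matching A a b K phi z w /\ matching_cost d p a b K phi z w < c.
Proof.
by move=> /ereal_inf_lt [_ [K [phi [z [w [m ->]]]]] lt]; exists K, phi, z, w.
Qed.

Lemma matching_cost_onto p a b K phi z w : b.1 `<=` phi @` K ->
  matching_cost d p a b K phi z w =
  lpnorm p a.1 (fun i => if `[< K i >] then d (a.2 i) (b.2 (phi i))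
                         else d (a.2 i) (z i)).
Proof.
move=> onto; rewrite /matching_cost.
have -> : b.1 `\` phi @` K = set0 by apply/seteqP; split=> // j [/onto].
by rewrite image_set0 setU0 lpnorm_image // => i j _ _ [].
Qed.

Lemma Wp_diag0_le p a x0 z : (forall i, a.1 i -> A (z i)) ->
  Wp d A p a (diag0 x0) <= lpnorm p a.1 (fun i => d (a.2 i) (z i)).
Proof.
move=> zA; have m : is_matching A a (diag0 x0) set0 id z z.
  by split=> // [_ [] //|i /zA].
have -> : lpnorm p a.1 (fun i => d (a.2 i) (z i)) =
          matching_cost d p a (diag0 x0) set0 id z z.
  by rewrite matching_cost_onto //; apply: eq_lpnorm => i _; rewrite asboolF.
exact: Wp_le_cost.
Qed.

Lemma Wp_diag0_lt p a x0 c : Wp d A p a (diag0 x0) < c ->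
  exists z, (forall i, a.1 i -> A (z i)) /\
            lpnorm p a.1 (fun i => d (a.2 i) (z i)) < c.
Proof.
move=> /Wp_lt_cost [K [phi [z [w [[_ _ phiK zA _]]]]]].
have K0 i : ~ K i by move=> Ki; apply: (phiK (phi i)); exists i.
rewrite matching_cost_onto // (eq_lpnorm p (g := fun i => d (a.2 i) (z i))).
  by move=> lt; exists z; split => // i ai; apply: zA.
by move=> i _; rewrite asboolF.
Qed.

Lemma Wp_lt_near p a b i (e : \bar R) : 1 <= p -> a.1 i -> Wp d A p a b < e ->
  exists2 y, d (a.2 i) y < e & (b.2 @` b.1) y \/ A y.
Proof.
move=> p1 ai /Wp_lt_cost [K [phi [z [w [[_ _ phiK zA _] lt]]]]].
have [d0 _ _ _] := dm.
move: lt; rewrite /matching_cost; set f := (fun t : nat + nat => _) => lt.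
have : f (inl i) < e.
  apply: le_lt_trans lt; apply: lpnorm_ge_term => //; first by left; exists i.
  by rewrite /f; case: ifP.
rewrite /f; case: (asboolP (K i)) => Ki lti.
  by exists (b.2 (phi i)) => //; left; exists (phi i) => //; apply: phiK; exists i.
by exists (z i) => //; right; apply: zA.
Qed.

End matchings.

Section separable_quotient.
Context {R : realType} {X : Type}.
Variables (d : X -> X -> \bar R) (A : set X) (p : \bar R).
Hypotheses (dm : is_emetric d) (p1 : 1 <= p).

Lemma Dp_finite (a : diagram) :
  finite_set a.1 -> is_diagram A a -> Dp d A p a.
Proof.
move=> afin adiag; have [d0 _ _ _] := dm.
have sub_fin (P : set nat) : finite_set (a.1 `&` P).
  by apply: sub_finite_set afin; exact: subIsetl.
split => //; case: p p1 => [r||] // r1; last by move=> e _; exact: sub_fin.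
split; first exact: sub_fin.
have [z zP] := dist_set_lt_choice d A a.2 +oo.
have zA i : (l_part d A +oo a).1 i -> A (z i) by case=> _ [/zP[]].
apply: le_lt_trans (Wp_diag0_le d _ a.2 zA) _.
apply: lpnorm_fin_lty; first by rewrite lee_fin in r1; lra.
- exact: sub_fin.
- by [].
- by move=> i [_ [/zP[]]].
Qed.

Lemma quot_dist_le x y : quot_dist d A p x y <= d x y.
Proof. by rewrite /quot_dist ge_min lexx. Qed.

Lemma quot_dist_le_dist_set x y : A y -> quot_dist d A p x y <= dist_set d A x.
Proof.
move=> Ay; rewrite /quot_dist (dist_set_mem dm Ay) ge_min; apply/orP; right.
have u0 := dist_set_ge0 A dm x.
case: p p1 => [r||] //= r1; last by apply: ge_ereal_sup => _ [->|[[] _ <-]].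
rewrite lee_fin in r1; have r0 : (0 < r)%R by lra.
rewrite (esumID [set true]); last by move=> *; exact: poweR_ge0.
rewrite setTI esum_set1 ?poweR_ge0 //= esum1 ?adde0; last first.
  by move=> [] [_ /= h] //; rewrite powR0 // gt_eqF.
by rewrite -poweRrM divff ?gt_eqF // poweRe1.
Qed.

Lemma separable_quotient :
  separable_in (Dp d A p) (Wp d A p) -> separable_in [set: X] (quot_dist d A p).
Proof.
move=> [D [_ Dc Dd]].
have [B [BA Bc Bne]] : exists B, [/\ B `<=` A, countable B & A !=set0 -> B !=set0].
  case: (pselect (A !=set0)) => [[a Aa]|nA]; last by exists set0; split.
  by exists [set a]; split => [_ -> //||_]; [exact: countable1 | exists a].
pose P := \bigcup_(t in D) (t.2 @` t.1).
exists (P `|` B); split => //.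
  apply: countableU => //; apply: bigcup_countable => // t _.
  exact: (sub_countable (card_image_le _ _)).
move=> x _ e e0.
have near_A : dist_set d A x < e%:E ->
    exists2 y, (P `|` B) y & quot_dist d A p x y < e%:E.
  move=> xA; have [a Aa xa] := dist_set_lt xA; have [b Bb] := Bne (ex_intro _ a Aa).
  exists b; first by right.
  apply: le_lt_trans (quot_dist_le_dist_set x (BA _ Bb)) _.
  exact: le_lt_trans (dist_set_le d x Aa) xa.
have [Ax|nAx] := pselect (A x).
  by apply: near_A; rewrite dist_set_mem // lte_fin.
pose s : diagram := ([set 0%N], fun=> x).
have sD : Dp d A p s by apply: Dp_finite; [exact: finite_set1 | move=> i _].
have [t Dt st] := Dd s sD e e0.
have [y xy [ty|Ay]] := Wp_lt_near dm p1 (erefl : s.1 0%N) st.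
  exists y; first by left; exists t.
  exact: le_lt_trans (quot_dist_le _ _) xy.
by apply: near_A; apply: le_lt_trans (dist_set_le d x Ay) xy.
Qed.

End separable_quotient.

Section separable_Dp.
Context {R : realType} {X : Type}.
Variables (d : X -> X -> \bar R) (A : set X).
Hypothesis dm : is_emetric d.

Definition seq_diagram (g : nat -> X) (c : seq (option nat)) : @diagram X :=
  ([set i | isSome (nth None c i)], fun i => g (odflt 0%N (nth None c i))).

Definition dense_outside (g : nat -> X) := forall x, ~ A x ->
  forall eta : R, (0 < eta)%R -> exists k, ~ A (g k) /\ d x (g k) < eta%:E.

Definition approx_cost (x y z : nat -> X) (K : set nat) (i : nat) : \bar R :=
  if `[< K i >] then d (x i) (y i) else d (x i) (z i).

Definition finite_approx (g : nat -> X) p (s : diagram) (e : R) :=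
  exists K kf z, [/\ finite_set K, K `<=` s.1,
    (forall i, s.1 i -> ~ K i -> A (z i)), (forall i, K i -> ~ A (g (kf i))) &
    lpnorm p s.1 (approx_cost s.2 (g \o kf) z K) < e%:E].

Lemma Wp_seq_diagram_lt g p s e : 1 <= p -> finite_approx g p s e ->
  exists c, Dp d A p (seq_diagram g c) /\ Wp d A p s (seq_diagram g c) < e%:E.
Proof.
move=> p1 [K [kf [z [Kfin Ks zA gA lt]]]].
have [n Kn] := finite_nat_bounded Kfin.
pose c := mkseq (fun i => if `[< K i >] then Some (kf i) else None) n.
have t1 i : isSome (nth None c i) <-> K i.
  split=> [|Ki]; last by rewrite nth_mkseq ?asboolT // Kn.
  case: (ltnP i n) => [ilt|ige]; last by rewrite nth_default ?size_mkseq.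
  by rewrite nth_mkseq //; case: asboolP.
have t2 i : K i -> odflt 0%N (nth None c i) = kf i.
  by move=> Ki; rewrite nth_mkseq ?asboolT // Kn.
exists c; split.
  apply: Dp_finite => //=; first by apply: sub_finite_set Kfin => i /t1.
  by move=> i /t1 Ki; rewrite /= t2 //; apply: gA.
have m : is_matching A s (seq_diagram g c) K id z z.
  by split => //= [_ [i Ki <-]|j /t1 Kj []]; [apply/t1 | exists j].
apply: le_lt_trans (Wp_le_cost d p m) _.
rewrite matching_cost_onto => [|j /t1 Kj]; last by exists j.
rewrite (eq_lpnorm p (g := approx_cost s.2 (g \o kf) z K)) // => i _.
by rewrite /approx_cost; case: asboolP => // Ki; rewrite /= t2.
Qed.

Lemma dense_outside_closed g : closed_in d A ->
  (forall x (eta : R), (0 < eta)%R -> exists k, d x (g k) < eta%:E) ->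
  dense_outside g.
Proof.
move=> Acl gd x nAx eta eta0.
have [r r0 rx] := closed_dist_set_gt0 dm Acl nAx.
have [k xk] : exists k, d x (g k) < (Order.min eta r)%:E.
  by apply: gd; rewrite lt_min eta0 r0.
exists k; split; last by apply: lt_le_trans xk _; rewrite lee_fin ge_min lexx.
move=> Agk; have := le_lt_trans (dist_set_le d x Agk) xk.
by apply/negP; rewrite -leNgt; apply: le_trans rx; rewrite lee_fin ge_min lexx orbT.
Qed.

Lemma dense_outside_choice g (x : nat -> X) (eta : R) :
  dense_outside g -> (0 < eta)%R ->
  exists kf, forall i, ~ A (x i) -> ~ A (g (kf i)) /\ d (x i) (g (kf i)) < eta%:E.
Proof.
move=> gd eta0; suff /choice [kf kfP] : forall i, exists k,
  ~ A (x i) -> ~ A (g k) /\ d (x i) (g k) < eta%:E by exists kf.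
move=> i.
have [Axi|nAxi] := pselect (A (x i)); first by exists 0%N.
by have [k kP] := gd _ nAxi _ eta0; exists k.
Qed.

Lemma finite_approx_Dpy g s (e : R) : dense_outside g -> (0 < e)%R ->
  Dp d A +oo s -> finite_approx g +oo s e.
Proof.
move=> gd e0 [sdiag sfin]; have e20 : (0 < e / 2)%R by lra.
pose K := (u_part d A (e / 2)%:E s).1.
have thickK i : s.1 i -> ~ K i -> thick d A (e / 2)%:E (s.2 i).
  by move=> si nK; apply: contrapT => nt; apply: nK.
have [z zP] := dist_set_lt_choice d A s.2 (e / 2)%:E.
have [kf kfP] := dense_outside_choice s.2 gd e20.
exists K, kf, z; split => //; first exact: sfin.
- exact: subIsetl.
- by move=> i si nK; case: (zP i (thickK i si nK)).
- by move=> i [si _]; case: (kfP i (sdiag i si)).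
apply: le_lt_trans (lpnormy_le (c := e / 2) _ _) _; last by rewrite lte_fin; lra.
  exact: ltW.
move=> i si; rewrite /approx_cost; apply: ltW; case: asboolP => [_|nK].
  by case: (kfP i (sdiag i si)).
by case: (zP i (thickK i si nK)).
Qed.

Lemma Dp_tail_le (r : R) s (eps : R) : (0 < r)%R -> (0 < eps)%R ->
  Dp d A r%:E s -> exists K z, [/\ finite_set K, K `<=` s.1,
    (forall i, s.1 i -> ~ K i -> A (z i)) &
    esum (s.1 `&` ~` K) (fun i => d (s.2 i) (z i) `^ r) <= eps%:E].
Proof.
move=> r0 eps0 [sdiag [Ufin Wlt]].
pose L := (l_part d A +oo s).1.
have [z [zA zlt]] := Wp_diag0_lt Wlt.
have Llt : esum L (fun i => d (s.2 i) (z i) `^ r) < +oo.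
  by apply: lty_poweRy zlt; rewrite invr_neq0 // gt_eqF.
have [F [Ffin FL] tail] := esum_tail_le eps0 (fun i _ => poweR_ge0 _ _) Llt.
pose K := (u_part d A +oo s).1 `|` F.
have LK i : s.1 i -> ~ K i -> (L `&` ~` F) i.
  move=> si nK; split; last by move=> Fi; apply: nK; right.
  split=> //; split; last exact: sdiag.
  by apply: contrapT => nt; apply: nK; left.
exists K, z; split.
- by rewrite finite_setU.
- by move=> i [[]//|/FL []].
- by move=> i si /(LK i si) [/zA].
- apply: le_trans tail; apply: esum_le_subset => [i [si /(LK i si)] //|i _].
  exact: poweR_ge0.
Qed.

Lemma finite_approx_Dp g (r : R) s (e : R) : dense_outside g -> (1 <= r)%R ->
  (0 < e)%R -> Dp d A r%:E s -> finite_approx g r%:E s e.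
Proof.
move=> gd r1 e0 sD; have [d0 _ _ _] := dm; have r0 : (0 < r)%R by lra.
pose q := ((e / 2) `^ r)%R.
have q20 : (0 < q / 2)%R by rewrite divr_gt0 // powR_gt0 //; lra.
have [K [z [Kfin Ks zA tail]]] := Dp_tail_le r0 q20 sD.
have [sq0 Ksq0] := (finite_seqP K).1 Kfin.
pose sq := undup sq0.
have KE : K = [set` sq] by rewrite Ksq0; apply/seteqP; split => i /=; rewrite mem_undup.
pose N : R := (size sq)%:R%R.
(* each of the [N] points of [K] will cost at most [eta ^ r = a] *)
pose a := (q / 2 / (N + 1))%R.
have a0 : (0 < a)%R by apply: divr_gt0 => //; apply: ltr_wpDl.
have Na : (N * a <= q / 2)%R.
  have N0 : (0 <= N)%R by rewrite /N.
  rewrite /a mulrA ler_pdivrMr; nra.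
pose eta := (a `^ r^-1)%R.
have eta0 : (0 < eta)%R by apply: powR_gt0.
have etar : (eta `^ r = a)%R by rewrite -powRrM mulVf ?gt_eqF // powRr1 // ltW.
have [kf kfP] := dense_outside_choice s.2 gd eta0.
have [sdiag _] := sD.
exists K, kf, z; split => //; first by move=> i /Ks si; case: (kfP i (sdiag i si)).
apply: le_lt_trans (lpnorm_le (c := e / 2) r0 _ _) _; last by rewrite lte_fin; lra.
  by lra.
rewrite -/q (esumID K) => [|*]; last exact: poweR_ge0.
rewrite (setIidr Ks); apply: le_trans (leeD (b := (N * a)%:E) (y := (q / 2)%:E) _ _) _.
- rewrite KE; apply: esum_le_size => [|i isq]; first exact: undup_uniq.
  have Ki : K i by rewrite KE.
  rewrite poweR_ge0 /approx_cost asboolT //= -etar -poweR_EFin.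
  apply: gt0_ler_poweR; rewrite ?ltW // ?in_itv /= ?d0 ?lee_fin ?powR_ge0 ?leey //.
  by case: (kfP i (sdiag i (Ks i Ki))).
- apply: le_trans tail; apply: le_esum => i [_ nK].
  by rewrite /approx_cost asboolF.
- by rewrite -EFinD lee_fin; lra.
Qed.

Lemma separable_Dp p : closed_in d A -> 1 <= p ->
  separable_in [set: X] d -> separable_in (Dp d A p) (Wp d A p).
Proof.
move=> Acl p1 [D0 [_ D0c D0d]].
case/pfcard_geP: D0c => [D00|/surjfunPex [g D0g]].
  exists set0; split => // s _; have [t] := D0d (s.2 0%N) I 1%R ltr01.
  by rewrite D00.
have gd : dense_outside g.
  apply: dense_outside_closed => // x eta eta0.
  by have [t] := D0d x I eta eta0; rewrite D0g => -[k _ <-]; exists k.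
pose D := seq_diagram g @` [set: seq (option nat)] `&` Dp d A p.
exists D; split; first exact: subIsetr.
  apply: sub_countable (subset_card_le (@subIsetl _ _ _)) _.
  exact: sub_countable (card_image_le _ _) _.
move=> s sD e e0.
have fa : finite_approx g p s e.
  case: p p1 sD {D} => [r||] // p1 sD; last exact: finite_approx_Dpy.
  by apply: finite_approx_Dp; rewrite // -lee_fin.
have [c [cD cs]] := Wp_seq_diagram_lt p1 fa.
by exists (seq_diagram g c) => //; split => //; exists c.
Qed.

End separable_Dp.

Unset Implicit Arguments.

Theorem theorem6p2 (R : realType) (X : Type) (d : X -> X -> \bar R)
  (A : set X) (p : \bar R) :
  is_emetric d -> closed_in d A -> 1 <= p ->
  (separable_in [set: X] d -> separable_in (Dp d A p) (Wp d A p)) /\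
  (separable_in (Dp d A p) (Wp d A p) ->
     separable_in [set: X] (quot_dist d A p)).
Proof.
move=> dm Acl p1; split; first exact: separable_Dp.
exact: separable_quotient.
Qed.
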